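(* Let $h,n\geq2$ and let $A_h$ be the alternating group. (i) If $h\leq n!$, then $O(A_h\times\{id\})=A_h\times\{id\}$. (ii) If $h>n!$, then $O(A_h\times\{id\})=S_h\times\{id\}$. (iii) $A_h\times\{id\}$ is an anonymity group with respect to $(h,n)$ if and only if $h\leq n!$.
   Context: Permutations compose as $(\sigma\tau)(x)=\sigma(\tau(x))$. Let $G=S_h\times S_n$ and $\mathcal{P}=(S_n)^h$ (preference profiles), with $G$ acting by $(p^{(\varphi,\psi)})_i=\psi\,p_{\varphi^{-1}(i)}$; $p^U=\{p^g:g\in U\}$. $U\leq G$ is regular if for every $p$, $\{g\in U:p^g=p\}\subseteq S_h\times\{id\}$. For regular $U$, $\mathcal{A}(U)$ is the set of regular $V\leq G$ with $V\geq U$ and $p^V\subseteq p^U$ for all $p$, and $O(U)=\langle\mathcal{A}(U)\rangle$. A social preference function (SPF) is any $F:\mathcal{P}\to S_n$; $G(F)=\{(\varphi,\psi)\in G: F(p^{(\varphi,\psi)})=\psi F(p)\ \forall p\}$ and $G_1(F)=G(F)\cap(S_h\times\{id\})$; $U\leq S_h\times\{id\}$ is an anonymity group with respect to $(h,n)$ if $U=G_1(F)$ for some SPF $F$. *)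

From mathcomp Require Import all_boot all_fingroup all_solvable.
Set Implicit Arguments. Unset Strict Implicit. Unset Printing Implicit Defensive.
Local Open Scope group_scope.

Definition gT (h n : nat) : finGroupType := ({perm 'I_h} * {perm 'I_n})%type.

Definition profile (h n : nat) := {ffun 'I_h -> {perm 'I_n}}.

(* Action: (p^(phi,psi))_i = psi o p_{phi^-1(i)}.
   MathComp's perm product is (s * t) x = t (s x), so psi o q is written q * psi. *)
Definition act (h n : nat) (p : profile h n) (g : gT h n) : profile h n :=
  [ffun i => p (g.1^-1 i) * g.2].

Definition orbitP (h n : nat) (U : {set gT h n}) (p : profile h n) : {set profile h n} :=
  [set act p g | g in U].

Definition SId (h n : nat) : {set gT h n} := [set g : gT h n | g.2 == 1].

Definition AId (h n : nat) : {set gT h n} := [set g : gT h n | (g.1 \in Alt 'I_h) && (g.2 == 1)].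

Definition regular (h n : nat) (U : {set gT h n}) : bool :=
  [forall p : profile h n, [set g in U | act p g == p] \subset SId h n].

Definition inA (h n : nat) (U : {set gT h n}) (V : {group gT h n}) : bool :=
  [&& regular V, U \subset V & [forall p : profile h n, orbitP V p \subset orbitP U p]].

Definition O (h n : nat) (U : {set gT h n}) : {set gT h n} :=
  << \bigcup_(V : {group gT h n} | inA U V) V >>.

Definition GF (h n : nat) (F : profile h n -> {perm 'I_n}) : {set gT h n} :=
  [set g : gT h n | [forall p : profile h n, F (act p g) == F p * g.2]].

Definition G1F (h n : nat) (F : profile h n -> {perm 'I_n}) : {set gT h n} :=
  GF F :&: SId h n.

Definition anonymity_group (h n : nat) (U : {set gT h n}) : Prop :=
  U \subset SId h n /\ exists F : profile h n -> {perm 'I_n}, U = G1F F.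

From Pilot Require Import Defs.
From mathcomp Require Import all_boot all_fingroup all_solvable.
Import Defs.
Set Implicit Arguments. Unset Strict Implicit. Unset Printing Implicit Defensive.
Local Open Scope group_scope.

(* Every V in A(U), U <= S_h x {id}, lies in S_h x {id}: if p^g = p^u with
   u in U, then g u^-1 stabilises p, and regularity of V applies.  If h <= n!,
   a profile p with pairwise distinct entries has trivial stabiliser in
   S_h x {id}, so p^V <= p^U forces V <= U, and the SPF marking the orbit
   p^(A_h x {id}) has G_1(F) = A_h x {id}.  If h > n!, every profile has two
   equal entries i, j, so the transposition (i j) fixes it: then
   p^(S_h x {id}) = p^(A_h x {id}), hence S_h x {id} is in A(A_h x {id}), and
   every SPF invariant under A_h x {id} is invariant under all of S_h x {id}. *)

Lemma exists_odd_perm (T : finType) :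
  1 < #|T| -> exists s : {perm T}, odd_perm s.
Proof.
by case/card_gt1P=> x [y [_ _ neq_xy]]; exists (tperm x y); rewrite odd_tperm.
Qed.

Section Profiles.
Variables h n : nat.
Implicit Types (p q : profile h n) (g u : gT h n) (U V : {set gT h n}).

Lemma act1 p : act p 1 = p.
Proof. by apply/ffunP=> i; rewrite !ffunE /= invg1 perm1 mulg1. Qed.

Lemma actM p g u : act (act p g) u = act p (g * u).
Proof. by apply/ffunP=> i; rewrite !ffunE /= mulgA invMg permM. Qed.

Lemma mem_SId g : (g \in SId h n) = (g.2 == 1).
Proof. by rewrite inE. Qed.

Lemma mem_AId g : (g \in AId h n) = (g.1 \in Alt 'I_h) && (g.2 == 1).
Proof. by rewrite inE. Qed.

Lemma SId_group_set : group_set (SId h n).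
Proof.
apply/group_setP; split=> [|x y]; rewrite !mem_SId // => /eqP x2 /eqP y2.
by rewrite /= x2 y2 mulg1.
Qed.
Canonical SId_group := group SId_group_set.

Lemma AId_group_set : group_set (AId h n).
Proof.
apply/group_setP; split=> [|x y]; rewrite !mem_AId; first by rewrite /= group1 eqxx.
case/andP=> x1 /eqP x2 /andP[y1 /eqP y2].
by rewrite /= groupM // x2 y2 mulg1 eqxx.
Qed.
Canonical AId_group := group AId_group_set.

Lemma AId_sub_SId : AId h n \subset SId h n.
Proof. by apply/subsetP=> g; rewrite mem_AId mem_SId => /andP[]. Qed.

Lemma SId_not_sub_AId : 1 < h -> ~~ (SId h n \subset AId h n).
Proof.
rewrite -{1}(card_ord h) => /exists_odd_perm[t odd_t]; apply/subsetPn.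
by exists (t, 1); rewrite ?mem_SId ?mem_AId ?Alt_even ?odd_t.
Qed.

Lemma mem_orbitP U p g : g \in U -> act p g \in orbitP U p.
Proof. exact: imset_f. Qed.

Lemma orbitP_act (U : {group gT h n}) p q u : u \in U ->
  (act q u \in orbitP U p) = (q \in orbitP U p).
Proof.
have orbit_closed v q' : v \in U -> q' \in orbitP U p -> act q' v \in orbitP U p.
  by move=> vU /imsetP[w wU ->]; rewrite actM mem_orbitP ?groupM.
move=> uU; apply/idP/idP; last exact: orbit_closed.
by move/(orbit_closed u^-1); rewrite actM mulgV act1 groupV; apply.
Qed.

Lemma regular_sub_SId V : V \subset SId h n -> regular V.
Proof.
move=> sVS; apply/forallP=> p; apply/subsetP=> g; rewrite inE => /andP[gV _].
exact: (subsetP sVS).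
Qed.

Lemma inA_self (U : {group gT h n}) : U \subset SId h n -> inA U U.
Proof.
by move=> sUS; rewrite /inA regular_sub_SId // subxx; apply/forallP=> p.
Qed.

Lemma inA_sub_SId U (V : {group gT h n}) :
  U \subset SId h n -> inA U V -> V \subset SId h n.
Proof.
move=> sUS /and3P[/forallP regV sUV /forallP sVU]; apply/subsetP=> g gV.
pose p : profile h n := [ffun=> 1].
have /imsetP[u uU act_gu] := subsetP (sVU p) _ (mem_orbitP p gV).
have uV := subsetP sUV u uU.
have /eqP u2 : u.2 == 1 by rewrite -mem_SId (subsetP sUS).
have fix_gu : act p (g * u^-1) = p by rewrite -actM act_gu actM mulgV act1.
have : g * u^-1 \in [set x in V | act p x == p].
  by rewrite inE groupM ?groupV ?fix_gu ?eqxx.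
by move/(subsetP (regV p)); rewrite !mem_SId /= u2 invg1 mulg1.
Qed.

Lemma act_SId_inj p : injective p -> {in SId h n &, injective (act p)}.
Proof.
move=> inj_p [g1 g2] [u1 u2]; rewrite !mem_SId /= => /eqP-> /eqP-> act_gu.
congr (_, _); apply: invg_inj; apply/permP=> i; apply: inj_p; apply: (mulIg 1).
by have := congr1 (fun q : profile h n => q i) act_gu; rewrite !ffunE.
Qed.

Lemma mem_of_orbitP_injective U p g : injective p -> U \subset SId h n ->
  g \in SId h n -> act p g \in orbitP U p -> g \in U.
Proof.
move=> inj_p sUS gS /imsetP[u uU].
by move/(act_SId_inj inj_p gS (subsetP sUS u uU))->.
Qed.

Lemma inA_sub_injective U (V : {group gT h n}) p : injective p ->
  U \subset SId h n -> inA U V -> V \subset U.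
Proof.
move=> inj_p sUS AV; have sVS := inA_sub_SId sUS AV.
case/and3P: AV => _ _ /forallP sVU; apply/subsetP=> g gV.
apply: (mem_of_orbitP_injective inj_p sUS (subsetP sVS g gV)).
exact: subsetP (sVU p) _ (mem_orbitP p gV).
Qed.

Lemma injective_profile_exists : h <= n`! -> exists p : profile h n, injective p.
Proof.
rewrite -card_Sn => le_h; exists [ffun i => enum_val (widen_ord le_h i)].
by move=> i j; rewrite !ffunE => /enum_val_inj[] /val_inj.
Qed.

Lemma profile_fixed_by_odd_perm p : n`! < h ->
  exists2 t : {perm 'I_h}, odd_perm t & act p (t, 1) = p.
Proof.
move=> lt_h; have /injectivePn[i [j neq_ij eq_ij]] : ~~ injectiveb p.
  by apply/injectiveP=> /leq_card; rewrite card_ord card_Sn leqNgt lt_h.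
exists (tperm i j); first by rewrite odd_tperm.
apply/ffunP=> k; rewrite ffunE /= tpermV mulg1.
by case: tpermP => // ->.
Qed.

Lemma orbitP_SId_AId p : n`! < h -> orbitP (SId h n) p = orbitP (AId h n) p.
Proof.
move=> lt_h; apply/eqP; rewrite eqEsubset (imsetS _ AId_sub_SId) andbT.
apply/subsetP=> _ /imsetP[[phi psi] + ->]; rewrite mem_SId /= => /eqP->.
have [t odd_t fix_t] := profile_fixed_by_odd_perm p lt_h.
case odd_phi: (odd_perm phi).
  rewrite -{1}fix_t actM mem_orbitP // mem_AId /= Alt_even odd_permM odd_t odd_phi.
  by rewrite mulg1 eqxx.
by rewrite mem_orbitP // mem_AId Alt_even odd_phi eqxx.
Qed.

Lemma mem_G1F_orbitP (F : profile h n -> {perm 'I_n}) U g :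
    U \subset G1F F -> g \in SId h n ->
  (forall p, act p g \in orbitP U p) -> g \in G1F F.
Proof.
move=> sUF gS orbit_g; rewrite inE gS andbT inE; apply/forallP=> p.
have /imsetP[u uU ->] := orbit_g p.
have := subsetP sUF u uU; rewrite !inE => /andP[/forallP/(_ p)/eqP-> /eqP->].
by move: gS; rewrite mem_SId => /eqP->.
Qed.

Definition orbit_spf U p (s : {perm 'I_n}) (q : profile h n) : {perm 'I_n} :=
  if q \in orbitP U p then s else 1.

Lemma sub_G1F_orbit_spf (U : {group gT h n}) p s :
  U \subset SId h n -> U \subset G1F (orbit_spf U p s).
Proof.
move=> sUS; apply/subsetP=> u uU; have uS := subsetP sUS u uU.
rewrite inE uS andbT inE; apply/forallP=> q; move: uS; rewrite mem_SId => /eqP->.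
by rewrite /orbit_spf orbitP_act // mulg1.
Qed.

Lemma orbitP_of_G1F_orbit_spf (U : {group gT h n}) p s g :
  s != 1 -> g \in G1F (orbit_spf U p s) -> act p g \in orbitP U p.
Proof.
move=> s_neq1; rewrite !inE => /andP[/forallP/(_ p) + /eqP g2].
have p_in : p \in orbitP U p by rewrite -{1}(act1 p) mem_orbitP.
rewrite g2 mulg1 /orbit_spf p_in.
by case: ifP => // _; rewrite eq_sym (negbTE s_neq1).
Qed.

Lemma G1F_orbit_spf_injective (U : {group gT h n}) p s :
  injective p -> s != 1 -> U \subset SId h n -> G1F (orbit_spf U p s) = U.
Proof.
move=> inj_p s_neq1 sUS; apply/eqP; rewrite eqEsubset sub_G1F_orbit_spf // andbT.
apply/subsetP=> g gF; apply: (mem_of_orbitP_injective inj_p sUS).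
  by move: gF; rewrite inE => /andP[].
exact: orbitP_of_G1F_orbit_spf gF.
Qed.

Lemma SId_sub_G1F F : n`! < h -> AId h n \subset G1F F -> SId h n \subset G1F F.
Proof.
move=> lt_h sAF; apply/subsetP=> g gS; apply: (mem_G1F_orbitP sAF gS) => p.
by rewrite -orbitP_SId_AId // mem_orbitP.
Qed.

Lemma O_sub U (W : {group gT h n}) :
  (forall V : {group gT h n}, inA U V -> V \subset W) -> O U \subset W.
Proof. by move=> sAW; rewrite gen_subG; apply/bigcupsP. Qed.

Lemma sub_O U (V : {group gT h n}) : inA U V -> V \subset O U.
Proof. by move=> AV; apply/subsetP=> g gV; apply/mem_gen/bigcupP; exists V. Qed.

Lemma O_injective (U : {group gT h n}) p :
  injective p -> U \subset SId h n -> O U = U.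
Proof.
move=> inj_p sUS; apply/eqP; rewrite eqEsubset sub_O ?inA_self // andbT.
by apply: O_sub => V; apply: inA_sub_injective inj_p sUS.
Qed.

Lemma O_AId_eq_SId : n`! < h -> O (AId h n) = SId h n.
Proof.
move=> lt_h; apply/eqP; rewrite eqEsubset; apply/andP; split.
  by apply: O_sub => V; apply: inA_sub_SId AId_sub_SId.
apply: sub_O; rewrite /inA regular_sub_SId // AId_sub_SId; apply/forallP=> p.
by rewrite orbitP_SId_AId.
Qed.

End Profiles.

Theorem mainTheorem18 (h n : nat) (hh : 2 <= h) (hn : 2 <= n) :
  (h <= n`! -> O (AId h n) = AId h n) /\
  (n`! < h -> O (AId h n) = SId h n) /\
  (anonymity_group (AId h n) <-> h <= n`!).
Proof.
have [s odd_s] : exists s : {perm 'I_n}, odd_perm s.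
  by apply: exists_odd_perm; rewrite card_ord.
have s_neq1 : s != 1 by apply: contraTneq odd_s => ->; rewrite odd_perm1.
split; [|split; first exact: O_AId_eq_SId].
  by case/injective_profile_exists=> p /O_injective; apply; apply: AId_sub_SId.
split=> [[_ [F def_AId]] | le_h].
  rewrite leqNgt; apply: contra (SId_not_sub_AId n hh) => lt_h.
  by rewrite def_AId SId_sub_G1F // -def_AId.
have [p inj_p] := injective_profile_exists le_h.
split; first exact: AId_sub_SId.
by exists (orbit_spf (AId h n) p s); rewrite G1F_orbit_spf_injective ?AId_sub_SId.
Qed.
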